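(* For every $n\in\mathbb{N}$ and every $l\in\{0,1,\dots,5\}$ there is a triangle-free outerplanar graph $G$ with $|V(G)|>n$, $|V_1(G)|=l$ and $\rho_G^3=3$ that has no equitable $3$-coloring.
   Context: For a graph $G$, $V_1(G)$ is the set of vertices of degree $1$, and for $A\subseteq V(G)$, $\|G[A]\|$ is the number of edges of $G[A]$. Define $\rho_G^3(A)=6\|G[A]\|-7|A|+3|A\cap V_1(G)|$ and $\rho_G^3=\max_{A\subseteq V(G)}\rho_G^3(A)$ (including $A=\emptyset$). An equitable $3$-coloring is a proper vertex coloring with $3$ colors in which the sizes of any two color classes differ by at most $1$. *)

From mathcomp Require Import all_boot all_order all_algebra.
Set Implicit Arguments. Unset Strict Implicit. Unset Printing Implicit Defensive.
Import Order.TTheory GRing.Theory Num.Theory.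

Section Graphs.
Variables (T : finType) (e : rel T).

Definition simple_graph : Prop := symmetric e /\ irreflexive e.

Definition triangle_free : Prop := forall x y z, ~ [&& e x y, e y z & e x z].

(* Outerplanar: the vertices can be placed in distinct positions on a circle
   (injective position map pos) so that no two edges, drawn as chords, cross;
   edges {a,b} and {c,d} cross iff pos a < pos c < pos b < pos d. *)
Definition outerplanar : Prop :=
  exists pos : T -> nat, injective pos /\
    forall a b c d, e a b -> e c d ->
      ~ [&& pos a < pos c, pos c < pos b & pos b < pos d].

Definition deg (x : T) : nat := #|[set y | e x y]|.
Definition V1 : {set T} := [set x | deg x == 1].

(* number of edges of G[A] (each edge counted once = ordered pairs / 2) *)
Definition edges_in (A : {set T}) : nat :=
  #|[set p : T * T | [&& p.1 \in A, p.2 \in A & e p.1 p.2]]| %/ 2.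

Definition rho3A (A : {set T}) : int :=
  (6 * (edges_in A)%:Z - 7 * (#|A|)%:Z + 3 * (#|A :&: V1|)%:Z)%R.

(* max over all A (including the empty set, whose value is 0) *)
Definition rho3 : int := \big[Order.max/0%R]_(A : {set T}) rho3A A.

Definition proper_coloring (k : nat) (c : T -> 'I_k) : Prop :=
  forall x y, e x y -> c x != c y.

Definition equitable_coloring (k : nat) (c : T -> 'I_k) : Prop :=
  proper_coloring c /\
  forall i j : 'I_k, #|[set x | c x == i]| <= #|[set x | c x == j]| + 1.

End Graphs.

(* The graph is a flower: a hub carrying l pendant leaves, 5 - l pentagons and
   p >= 1 heptagons, each cycle passing through the hub; it is triangle-free and
   outerplanar. Splitting rho(A) over the petals, the hub costs -7, a leaf or a
   pentagon contributes at most 2 (exactly 2 when it lies in A together with the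
   hub) and a heptagon at most 0, so rho = -7 + 2 * 5 = 3, attained by the hub with
   its leaves and pentagons. In a proper 3-colouring the class of the hub avoids all
   its neighbours, hence meets each pentagon in at most one vertex and each heptagon
   in at most two; it has at most 6 - l + 2p vertices, whereas the graph has
   21 - 3l + 6p > 3 (6 - l + 2p) + 2 of them, so no 3-colouring is equitable. *)

From mathcomp Require Import all_boot all_order all_algebra.
From mathcomp Require Import zify.
Import Order.TTheory GRing.Theory Num.Theory.
Set Implicit Arguments. Unset Strict Implicit. Unset Printing Implicit Defensive.

Lemma card_pairs_sum (T : finType) (P : T -> T -> bool) :
  #|[set q : T * T | P q.1 q.2]| = \sum_(x : T) \sum_(y : T) P x y.
Proof.
rewrite -sum1_card big_mkcond pair_bigA /=.
by apply: eq_bigr => -[x y] _; rewrite inE; case: (P x y).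
Qed.

Lemma edges_in_lt m (e : rel 'I_m) (A : {set 'I_m}) :
  symmetric e -> irreflexive e ->
  edges_in e A = \sum_(x < m) \sum_(y < m) [&& x \in A, y \in A, e x y & x < y].
Proof.
move=> e_sym e_irr; rewrite /edges_in -card_pairs_sum.
set P := [set q | _]; set Plt := [set q | _].
rewrite -(cardsID [set q : 'I_m * 'I_m | q.1 < q.2] P).
have swapK : involutive (fun q : 'I_m * 'I_m => (q.2, q.1)) by case.
have -> : P :&: [set q : 'I_m * 'I_m | q.1 < q.2] = Plt.
  by apply/setP => q; rewrite !inE; case: (_ < _); rewrite ?andbT ?andbF.
have -> : P :\: [set q : 'I_m * 'I_m | q.1 < q.2] = [set (q.2, q.1) | q in Plt].
  rewrite (can_imset_pre _ swapK); apply/setP => -[x y]; rewrite !inE /= e_sym.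
  case: (ltngtP x y) => [_|_|/val_inj->]; rewrite ?e_irr ?andbF //=.
  by rewrite andbT; case: (x \in A); case: (y \in A).
rewrite card_imset; last exact: can_inj swapK.
by rewrite addnn -muln2 mulnK.
Qed.

Lemma sum_colour_classes (T : finType) k (c : T -> 'I_k) :
  \sum_(i < k) #|[set x | c x == i]| = #|T|.
Proof.
rewrite -sum1_card (partition_big c predT) //; apply: eq_bigr => i _.
by rewrite -sum1_card; apply: eq_bigl => x; rewrite inE.
Qed.

Lemma equitable3_card_le (T : finType) (e : rel T) (c : T -> 'I_3) i :
  equitable_coloring e c -> #|T| <= 3 * #|[set x | c x == i]| + 2.
Proof.
move=> [_ balanced]; rewrite -(sum_colour_classes c) (bigD1 i) //=.
have others : \sum_(j < 3 | j != i) #|[set x | c x == j]| <=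
              \sum_(j < 3 | j != i) (#|[set x | c x == i]| + 1).
  by apply: leq_sum => j _; apply: balanced.
rewrite sum_nat_const cardC1 card_ord /= in others.
by apply: leq_trans (leq_add (leqnn _) others) _; lia.
Qed.

Lemma sum_nat_pred1 n c (g : nat -> nat) :
  \sum_(0 <= y < n) (y == c) * g y = (c < n) * g c.
Proof.
elim: n => [|n IHn]; first by rewrite big_geq.
rewrite big_nat_recr // IHn; case: (eqVneq n c) => [->|ne] /=; lia.
Qed.

Lemma sum_affine n k c (g : 'I_n -> nat) :
  \sum_(j < n) (k * g j + c) = k * \sum_(j < n) g j + n * c.
Proof. by rewrite big_split big_distrr sum_nat_const card_ord. Qed.

Lemma big_nat_blocks (R : Type) (idx : R) (op : Monoid.law idx) a q s (f : nat -> R) :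
  \big[op/idx]_(a <= y < a + q * s) f y =
  \big[op/idx]_(j < q) \big[op/idx]_(i < s) f (a + j * s + i).
Proof.
rewrite -{1}[a]add0n big_addn addKn big_nat_mul big_mkord; apply: eq_bigr => j _.
rewrite -{1}[j * s]add0n big_addn mulSn addnK big_mkord.
by apply: eq_bigr => i _; congr f; lia.
Qed.

Section Flower.
Variables (L p : nat).

(* Vertex 0 is the hub and 1, ..., L are the leaves; then come npent paths of four
   vertices [pent j i] and p paths of six vertices [hept j i]. The two ends (tips)
   of every path, a leaf being a path with one vertex, are joined to the hub, and
   [linked y] means that y is joined to y.+1. [flower_arc] lists every edge once,
   from its smaller end. *)

Definition npent := 5 - L.
Definition hept_base := L + npent * 4.
Definition nlast := hept_base + p * 6.
Local Notation m := nlast.+1.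

Definition pent j i := L.+1 + j * 4 + i.
Definition hept j i := hept_base.+1 + j * 6 + i.

Definition is_leaf y := 0 < y <= L.
Definition is_start y := [|| is_leaf y,
  [&& L < y, y <= hept_base & (y - L.+1) %% 4 == 0]
  | (hept_base < y) && ((y - hept_base.+1) %% 6 == 0)].
Definition is_end y := [|| is_leaf y,
  [&& L < y, y <= hept_base & (y - L.+1) %% 4 == 3]
  | (hept_base < y) && ((y - hept_base.+1) %% 6 == 5)].
Definition is_tip y := is_start y || is_end y.
Definition linked y := (0 < y) && ~~ is_end y.

Definition flower_arc x y := ((x == 0) && is_tip y) || ((y == x.+1) && linked x).
Definition flower_adj x y := flower_arc x y || flower_arc y x.
Definition flower : rel 'I_m := fun x y => flower_adj x y.

Local Ltac block_arith :=
  unfold is_tip, linked, is_start, is_end, is_leaf, pent, hept, nlast, hept_base, npent in *; lia.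

Lemma tip_gt0 y : is_tip y -> 0 < y.
Proof. block_arith. Qed.

Lemma start_succ_not_tip y : is_start y -> ~~ is_end y -> ~~ is_tip y.+1.
Proof. block_arith. Qed.

Lemma start_end_leaf y : is_start y -> is_end y -> is_leaf y.
Proof. block_arith. Qed.

Lemma pred_linked y : 0 < y -> ~~ is_start y -> linked y.-1.
Proof. block_arith. Qed.

Lemma tip1 : is_tip 1.
Proof. block_arith. Qed.

Lemma leaf_kind y : is_leaf y -> is_tip y /\ linked y = false.
Proof. block_arith. Qed.

Lemma pent_kind j i : j < npent -> i < 4 ->
  [/\ is_leaf (pent j i) = false, is_tip (pent j i) = (i == 0) || (i == 3)
    & linked (pent j i) = (i != 3)].
Proof. by move=> jF i4; split; block_arith. Qed.

Lemma hept_kind j i : i < 6 ->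
  [/\ is_leaf (hept j i) = false, is_tip (hept j i) = (i == 0) || (i == 5)
    & linked (hept j i) = (i != 5)].
Proof. by move=> i6; split; block_arith. Qed.

Lemma pent_succ j i : (pent j i).+1 = pent j i.+1.
Proof. exact: esym (addnS _ _). Qed.

Lemma hept_succ j i : (hept j i).+1 = hept j i.+1.
Proof. exact: esym (addnS _ _). Qed.

Lemma pent_adj j i : j < npent -> i < 3 -> flower_adj (pent j i) (pent j i.+1).
Proof.
move=> jF i3; case: (pent_kind jF (leq_trans i3 (leqnSn 3))) => _ _ kj.
by rewrite /flower_adj /flower_arc -pent_succ eqxx kj neq_ltn i3 orbT.
Qed.

Lemma hept_adj j i : i < 5 -> flower_adj (hept j i) (hept j i.+1).
Proof.
move=> i5; case: (hept_kind j (leq_trans i5 (leqnSn 5))) => _ _ kj.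
by rewrite /flower_adj /flower_arc -hept_succ eqxx kj neq_ltn i5 orbT.
Qed.

Lemma flower_adjC : symmetric flower_adj.
Proof. by move=> x y; rewrite /flower_adj orbC. Qed.

Lemma flower_arc_lt x y : flower_arc x y -> x < y.
Proof. by case/orP=> [/andP[/eqP-> /tip_gt0]|/andP[/eqP-> _]]. Qed.

Lemma flower_adj_lt x y : flower_adj x y && (x < y) = flower_arc x y.
Proof.
apply/idP/idP => [/andP[/orP[//|/flower_arc_lt yx] xy] | xy].
  by move: (ltn_trans xy yx); rewrite ltnn.
by rewrite /flower_adj xy (flower_arc_lt xy).
Qed.

Lemma flower_adj_irr x : flower_adj x x = false.
Proof. by apply/negP => /orP[] /flower_arc_lt; rewrite ltnn. Qed.

Lemma flower_simple : simple_graph flower.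
Proof. by split=> [x y|x]; [apply: flower_adjC | apply: flower_adj_irr]. Qed.

Lemma flower_adjP x y : flower_adj x y -> [\/ x = 0, y = 0, y = x.+1 | x = y.+1].
Proof.
case/orP=> /orP[/andP[/eqP-> _]|/andP[/eqP-> _]];
  by [constructor 1|constructor 3|constructor 2|constructor 4].
Qed.

Lemma flower_adj0 y : flower_adj 0 y = is_tip y.
Proof.
rewrite /flower_adj /flower_arc /= andbF orbF.
by case: (boolP (is_tip y)) => [/tip_gt0|_]; rewrite ?andbF //; case: y.
Qed.

Lemma tips_nonadjacent y z : is_tip y -> is_tip z -> ~~ flower_adj y z.
Proof.
wlog lt_yz : y z / y < z.
  move=> gen ty tz; case: (ltngtP y z) => [yz|zy|<-]; first exact: gen.
  - by rewrite flower_adjC; apply: gen.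
  - by rewrite flower_adj_irr.
move=> ty tz; rewrite -[flower_adj y z]andbT -lt_yz flower_adj_lt.
apply/orP=> -[/andP[/eqP y0 _]|/andP[/eqP z_succ /andP[_ ne]]].
  by move: (tip_gt0 ty); rewrite y0.
have sy : is_start y by move: ty; rewrite /is_tip (negbTE ne) orbF.
by move: (start_succ_not_tip sy ne); rewrite -z_succ tz.
Qed.

Lemma hub_triangle_free y z : flower_adj 0 y -> flower_adj 0 z -> ~~ flower_adj y z.
Proof. by rewrite !flower_adj0; apply: tips_nonadjacent. Qed.

Lemma flower_triangle_free : triangle_free flower.
Proof.
move=> x y z /and3P[xy yz xz]; rewrite /flower in xy yz xz.
have [x0|x_gt0] := posnP x.
  by rewrite x0 in xy xz; move: (hub_triangle_free xy xz); rewrite yz.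
have [y0|y_gt0] := posnP y.
  by rewrite y0 flower_adjC in xy yz; move: (hub_triangle_free xy yz); rewrite xz.
have [z0|z_gt0] := posnP z.
  by rewrite z0 !(flower_adjC _ 0) in xz yz; move: (hub_triangle_free xz yz); rewrite xy.
case/flower_adjP: xy => [|||]; try lia; case/flower_adjP: yz => [|||]; try lia;
case/flower_adjP: xz => [|||]; lia.
Qed.

Lemma flower_outerplanar : outerplanar flower.
Proof.
exists (@nat_of_ord m); split=> [|a b c d ab cd]; first exact: val_inj.
move/and3P => [ac cb bd].
case/flower_adjP: ab => [|||]; case/flower_adjP: cd => [|||]; lia.
Qed.

Lemma leaf_adj y z : is_leaf y -> flower_adj y z = (z == 0).
Proof.
move=> ly; have [_ ny] := leaf_kind ly.
have [->|z_gt0] := posnP z; first by rewrite flower_adjC flower_adj0; case: (leaf_kind ly).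
have lz : z < y -> is_leaf z by move: ly; rewrite /is_leaf; lia.
have y_gt0 : 0 < y by case/andP: ly.
rewrite /flower_adj /flower_arc ny !(gtn_eqF y_gt0, gtn_eqF z_gt0) andbF /=.
by apply/negbTE/andP => -[/eqP yz]; rewrite (leaf_kind (lz _)).2 // yz.
Qed.

Hypothesis p_gt0 : 0 < p.

Lemma linked_lt_nlast y : y <= nlast -> linked y -> y < nlast.
Proof. block_arith. Qed.

Lemma tip_nlast : is_tip nlast.
Proof. block_arith. Qed.

Lemma nonleaf_two_neighbours x : x <= nlast -> ~~ is_leaf x ->
  exists y z, [/\ y != z, y <= nlast, z <= nlast, flower_adj x y & flower_adj x z].
Proof.
move=> x_le nlx; have [->|x_gt0] := posnP x.
  exists 1, nlast; rewrite !flower_adj0 tip1 tip_nlast /nlast; split=> //; lia.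
have tip_adj : is_tip x -> flower_adj x 0 by rewrite flower_adjC flower_adj0.
have linked_pred sx : linked x.-1 := pred_linked x_gt0 (negbT sx).
exists (if is_start x then 0 else x.-1), (if is_end x then 0 else x.+1); split.
- case: ifP => sx; case: ifP => ex //.
  + by move: nlx; rewrite start_end_leaf.
  + by case/andP: (linked_pred sx) => ? _; lia.
  + lia.
- by case: ifP => // _; apply: leq_trans x_le; apply: leq_pred.
- by case: ifP => // ex; apply: linked_lt_nlast => //; rewrite /linked x_gt0 ex.
- case: ifP => sx; first by apply: tip_adj; rewrite /is_tip sx.
  by rewrite /flower_adj /flower_arc prednK // eqxx (linked_pred sx) !orbT.
- case: ifP => ex; first by apply: tip_adj; rewrite /is_tip ex orbT.
  by rewrite /flower_adj /flower_arc eqxx /linked x_gt0 ex orbT.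
Qed.

Implicit Types A : {set 'I_m}.

Lemma big_flower_split (f : nat -> nat) :
  \sum_(1 <= y < m) f y =
  \sum_(j < L) f j.+1 + \sum_(j < npent) \sum_(i < 4) f (pent j i)
  + \sum_(j < p) \sum_(i < 6) f (hept j i).
Proof.
have L_le : L.+1 <= hept_base.+1 by rewrite ltnS leq_addr.
have base_le : hept_base.+1 <= m by rewrite ltnS leq_addr.
rewrite (big_cat_nat _ (n := L.+1)) // ?(leq_trans L_le) //.
rewrite (big_cat_nat _ (n := hept_base.+1) (m := L.+1)) //.
rewrite /= addnA big_add1 big_mkord -(big_nat_blocks _ L.+1 _ 4).
by rewrite -(big_nat_blocks _ hept_base.+1 p 6).
Qed.

Definition mem_nat (A : {set 'I_m}) y := (y < m) && (inord y \in A).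
Arguments mem_nat : simpl never.

Lemma mem_nat_ord A (x : 'I_m) : mem_nat A x = (x \in A).
Proof. by rewrite /mem_nat ltn_ord inord_val. Qed.

Lemma card_mem_nat A : #|A| = \sum_(0 <= y < m) mem_nat A y.
Proof.
rewrite -sum1_card big_mkcond big_mkord; apply: eq_bigr => x _.
by rewrite mem_nat_ord; case: (x \in A).
Qed.

Lemma mem_nat_set (P : pred nat) y : mem_nat [set x : 'I_m | P x] y = (y < m) && P y.
Proof. by rewrite /mem_nat inE; case: ltnP => // y_lt; rewrite inordK. Qed.

Lemma mem_natI A (P : pred nat) y :
  mem_nat (A :&: [set x : 'I_m | P x]) y = mem_nat A y && P y.
Proof. by rewrite /mem_nat !inE; case: ltnP => // y_lt; rewrite inordK // andbA. Qed.

Lemma V1_flower : V1 flower = [set x : 'I_m | is_leaf x].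
Proof.
apply/setP => x; rewrite !inE /deg; case: (boolP (is_leaf x)) => lx.
  suff -> : [set y | flower x y] = [set ord0] by rewrite cards1.
  by apply/setP => y; rewrite !inE /flower leaf_adj // -val_eqE.
have [y [z [yz y_le z_le xy xz]]] := nonleaf_two_neighbours (ltn_ord x) lx.
apply/negbTE; rewrite neq_ltn; apply/orP; right.
apply/card_gt1P; exists (inord y), (inord z); rewrite !inE /flower !inordK //; split=> //.
by apply: contra yz => /eqP/(congr1 val); rewrite /= !inordK // => ->.
Qed.

Lemma card_V1_flower : #|V1 flower| = L.
Proof.
rewrite V1_flower card_mem_nat big_ltn // mem_nat_set /=.
rewrite (eq_big_nat _ _ (F2 := fun y => nat_of_bool (is_leaf y))) => [|y /andP[_ y_lt]];
  last by rewrite mem_nat_set y_lt.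
rewrite big_flower_split [\sum_(j < p) _]big1 => [|j _]; last first.
  by apply: big1 => i _; case: (hept_kind j (ltn_ord i)) => ->.
rewrite [\sum_(j < npent) _]big1 => [|j _]; last first.
  by apply: big1 => i _; case: (pent_kind (ltn_ord j) (ltn_ord i)) => ->.
rewrite (eq_bigr (fun=> 1)) => [|j _]; first by rewrite sum_nat_const card_ord muln1 /= !addn0.
by rewrite /is_leaf /= ltn_ord.
Qed.

(** * The density rho3 *)

Definition hub_edge A y := [&& mem_nat A 0, mem_nat A y & is_tip y].
Definition path_edge A y := [&& mem_nat A y, linked y & mem_nat A y.+1].

Lemma flower_arc_indicator A x y :
  (mem_nat A x && mem_nat A y && flower_arc x y : nat) =
  (x == 0) * hub_edge A y + (y == x.+1) * path_edge A x.
Proof.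
rewrite /flower_arc /hub_edge /path_edge.
have linked0 : linked 0 = false by [].
case: x => [|x] /=.
  by rewrite linked0 !(andbF, andFb) orbF muln0 addn0 mul1n andbA.
rewrite mul0n add0n; case: eqP => [->|_] /=; last by rewrite andbF.
by rewrite mul1n andbAC andbA.
Qed.

Lemma edges_in_flower A :
  edges_in flower A = \sum_(1 <= y < m) (hub_edge A y + path_edge A y).
Proof.
have [flower_sym flower_irr] := flower_simple.
have hub_part : \sum_(0 <= x < m) \sum_(0 <= y < m) ((x == 0) * hub_edge A y) =
                \sum_(0 <= y < m) hub_edge A y.
  rewrite exchange_big_nat; apply: eq_big_nat => y _.
  by rewrite (sum_nat_pred1 _ _ (fun=> hub_edge A y)) ltn0Sn mul1n.
have path_part : \sum_(0 <= x < m) \sum_(0 <= y < m) ((y == x.+1) * path_edge A x) =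
                 \sum_(0 <= x < m) path_edge A x.
  apply: eq_big_nat => x _; rewrite (sum_nat_pred1 _ _ (fun=> path_edge A x)).
  by rewrite /path_edge /mem_nat; case: ltnP => _; rewrite ?mul1n ?(andFb, andbF).
rewrite edges_in_lt //.
transitivity (\sum_(0 <= x < m) (\sum_(0 <= y < m) (x == 0) * hub_edge A y +
                                 \sum_(0 <= y < m) (y == x.+1) * path_edge A x)).
  rewrite big_mkord; apply: eq_bigr => x _; rewrite -big_split big_mkord.
  apply: eq_bigr => y _.
  by rewrite /= -flower_arc_indicator /flower -flower_adj_lt !mem_nat_ord andbA.
rewrite big_split /= hub_part path_part -big_split big_ltn //=.
by rewrite [hub_edge A 0]/hub_edge [path_edge A 0]/path_edge /= !andbF.
Qed.

(* Each edge of G[A] is charged to its larger end, so that the charges add up to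
   6 |E(G[A])| + 3 |A :&: V1|. *)
Definition charge A y := 6 * (hub_edge A y + path_edge A y) + 3 * (mem_nat A y && is_leaf y).

Lemma leaf_charge A j : j < L ->
  charge A j.+1 = 6 * (mem_nat A 0 && mem_nat A j.+1) + 3 * mem_nat A j.+1.
Proof.
move=> jL; have lj : is_leaf j.+1 by rewrite /is_leaf /= jL.
case: (leaf_kind lj) => tj nj.
by rewrite /charge /hub_edge /path_edge tj nj lj !andbF andbT addn0 andbA.
Qed.

Lemma pent_charge A j : j < npent ->
  \sum_(i < 4) charge A (pent j i) =
  6 * ((mem_nat A 0 && mem_nat A (pent j 0)) + (mem_nat A 0 && mem_nat A (pent j 3))
     + (mem_nat A (pent j 0) && mem_nat A (pent j 1))
     + (mem_nat A (pent j 1) && mem_nat A (pent j 2))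
     + (mem_nat A (pent j 2) && mem_nat A (pent j 3))).
Proof.
move=> jF; have charge_i i : i < 4 -> charge A (pent j i) =
    6 * ([&& mem_nat A 0, mem_nat A (pent j i) & (i == 0) || (i == 3)]
       + [&& mem_nat A (pent j i), i != 3 & mem_nat A (pent j i.+1)]).
  move=> i4; case: (pent_kind jF i4) => lj tj kj.
  by rewrite /charge /hub_edge /path_edge lj tj kj pent_succ andbF addn0.
rewrite !big_ord_recr big_ord0 /= !charge_i //=.
by move: (mem_nat A 0) (mem_nat A (pent j 0)) (mem_nat A (pent j 1))
  (mem_nat A (pent j 2)) (mem_nat A (pent j 3)) (mem_nat A (pent j 4)); do 6 case.
Qed.

Lemma hept_charge A j :
  \sum_(i < 6) charge A (hept j i) =
  6 * ((mem_nat A 0 && mem_nat A (hept j 0)) + (mem_nat A 0 && mem_nat A (hept j 5))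
     + (mem_nat A (hept j 0) && mem_nat A (hept j 1))
     + (mem_nat A (hept j 1) && mem_nat A (hept j 2))
     + (mem_nat A (hept j 2) && mem_nat A (hept j 3))
     + (mem_nat A (hept j 3) && mem_nat A (hept j 4))
     + (mem_nat A (hept j 4) && mem_nat A (hept j 5))).
Proof.
have charge_i i : i < 6 -> charge A (hept j i) =
    6 * ([&& mem_nat A 0, mem_nat A (hept j i) & (i == 0) || (i == 5)]
       + [&& mem_nat A (hept j i), i != 5 & mem_nat A (hept j i.+1)]).
  move=> i6; case: (hept_kind j i6) => lj tj kj.
  by rewrite /charge /hub_edge /path_edge lj tj kj hept_succ andbF addn0.
rewrite !big_ord_recr big_ord0 /= !charge_i //=.
by move: (mem_nat A 0) (mem_nat A (hept j 0)) (mem_nat A (hept j 1)) (mem_nat A (hept j 2))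
  (mem_nat A (hept j 3)) (mem_nat A (hept j 4)) (mem_nat A (hept j 5)) (mem_nat A (hept j 6));
  do 8 case.
Qed.

Lemma pent_charge_le A j : j < npent ->
  \sum_(i < 4) charge A (pent j i) <= 7 * \sum_(i < 4) mem_nat A (pent j i) + 2 * mem_nat A 0.
Proof.
move=> jF; rewrite pent_charge // !big_ord_recr big_ord0 /=.
by move: (mem_nat A 0) (mem_nat A (pent j 0)) (mem_nat A (pent j 1))
  (mem_nat A (pent j 2)) (mem_nat A (pent j 3)); do 5 case.
Qed.

Lemma hept_charge_le A j :
  \sum_(i < 6) charge A (hept j i) <= 7 * \sum_(i < 6) mem_nat A (hept j i).
Proof.
rewrite hept_charge !big_ord_recr big_ord0 /=.
by move: (mem_nat A 0) (mem_nat A (hept j 0)) (mem_nat A (hept j 1)) (mem_nat A (hept j 2))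
  (mem_nat A (hept j 3)) (mem_nat A (hept j 4)) (mem_nat A (hept j 5)); do 7 case.
Qed.

Lemma rho3A_flower A :
  rho3A flower A =
  ((\sum_(1 <= y < m) charge A y)%:Z - 7 * (mem_nat A 0 + \sum_(1 <= y < m) mem_nat A y)%:Z)%R.
Proof.
rewrite /rho3A edges_in_flower V1_flower card_mem_nat (card_mem_nat (A :&: _)).
rewrite !(big_ltn (ltn0Sn _)).
have leaves_in : \sum_(1 <= y < m) mem_nat (A :&: [set x : 'I_m | is_leaf x]) y =
                 \sum_(1 <= y < m) (mem_nat A y && is_leaf y).
  by apply: eq_big_nat => y _; rewrite mem_natI.
have charge_split : \sum_(1 <= y < m) charge A y =
    6 * \sum_(1 <= y < m) (hub_edge A y + path_edge A y) +
    3 * \sum_(1 <= y < m) (mem_nat A y && is_leaf y).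
  by rewrite big_split -!big_distrr.
rewrite leaves_in charge_split mem_natI andbF; lia.
Qed.

Hypothesis L_le5 : L <= 5.

Lemma L_add_npent : L + npent = 5.
Proof. exact: subnKC. Qed.

Lemma charge_sum_le A :
  \sum_(1 <= y < m) charge A y <= 7 * \sum_(1 <= y < m) mem_nat A y + 10 * mem_nat A 0.
Proof.
rewrite !big_flower_split /=.
have leaves : \sum_(j < L) charge A j.+1 <= \sum_(j < L) (7 * mem_nat A j.+1 + 2 * mem_nat A 0).
  by apply: leq_sum => j _; rewrite leaf_charge //; case: (mem_nat A 0); case: (mem_nat A j.+1).
have pents : \sum_(j < npent) \sum_(i < 4) charge A (pent j i) <=
             \sum_(j < npent) (7 * \sum_(i < 4) mem_nat A (pent j i) + 2 * mem_nat A 0).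
  by apply: leq_sum => j _; apply: pent_charge_le.
have hepts : \sum_(j < p) \sum_(i < 6) charge A (hept j i) <=
             \sum_(j < p) (7 * \sum_(i < 6) mem_nat A (hept j i) + 0).
  by apply: leq_sum => j _; rewrite addn0; apply: hept_charge_le.
move: leaves pents hepts; rewrite !sum_affine; have := L_add_npent.
by case: (mem_nat A 0) => /=; lia.
Qed.

Lemma rho3A_flower_le A : (rho3A flower A <= 3)%R.
Proof.
rewrite rho3A_flower; have := charge_sum_le A.
case: (mem_nat A 0) => /=; lia.
Qed.

Definition core : {set 'I_m} := [set x : 'I_m | x <= hept_base].

Lemma mem_nat_core y : mem_nat core y = (y < m) && (y <= hept_base).
Proof. by rewrite /mem_nat inE; case: ltnP => // y_lt; rewrite inordK. Qed.

Lemma charge_sum_core :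
  \sum_(1 <= y < m) charge core y = 7 * \sum_(1 <= y < m) mem_nat core y + 10.
Proof.
have hub_in : mem_nat core 0 by rewrite mem_nat_core.
have leaf_in j : j < L -> mem_nat core j.+1.
  by move=> jL; rewrite mem_nat_core /nlast /hept_base; apply/andP; split; lia.
have pent_in j i : j < npent -> i < 4 -> mem_nat core (pent j i).
  move=> jF i4; rewrite mem_nat_core /pent /nlast /hept_base.
  by move: jF; rewrite /npent => jF; apply/andP; split; lia.
have hept_out j i : mem_nat core (hept j i) = false.
  by rewrite mem_nat_core /hept; apply/negbTE; lia.
rewrite !big_flower_split /=.
have leaves : \sum_(j < L) charge core j.+1 = \sum_(j < L) (7 * mem_nat core j.+1 + 2).
  by apply: eq_bigr => j _; rewrite leaf_charge // leaf_in // hub_in.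
have pents : \sum_(j < npent) \sum_(i < 4) charge core (pent j i) =
             \sum_(j < npent) (7 * \sum_(i < 4) mem_nat core (pent j i) + 2).
  apply: eq_bigr => j _; rewrite pent_charge // !big_ord_recr big_ord0 /=.
  by rewrite hub_in !pent_in.
have hepts : \sum_(j < p) \sum_(i < 6) charge core (hept j i) =
             \sum_(j < p) (7 * \sum_(i < 6) mem_nat core (hept j i) + 0).
  by apply: eq_bigr => j _; rewrite hept_charge !big_ord_recr big_ord0 /= !hept_out andbF.
rewrite leaves pents hepts !sum_affine /=; have := L_add_npent; lia.
Qed.

Lemma rho3_flower : rho3 flower = 3%Z.
Proof.
apply/le_anti/andP; split.
  by apply/bigmax_leP; split=> // A _; apply: rho3A_flower_le.
apply: le_trans (le_bigmax _ _ core) => /=.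
rewrite rho3A_flower charge_sum_core mem_nat_core /=; lia.
Qed.


(** * The colour class of the hub *)

Section HubClass.
Variable c : 'I_m -> 'I_3.
Hypothesis c_proper : proper_coloring flower c.
Let hub_class := [set x | c x == c ord0].

Lemma hub_in_class : mem_nat hub_class 0.
Proof. by rewrite /mem_nat inE; apply/eqP; congr c; apply: val_inj; rewrite /= inordK. Qed.

Lemma hub_class_nonadj x y : flower_adj x y -> ~~ (mem_nat hub_class x && mem_nat hub_class y).
Proof.
move=> xy; apply/negP => /andP[/andP[x_lt xC] /andP[y_lt yC]].
have := c_proper (x := inord x) (y := inord y); rewrite /flower !inordK // => /(_ xy).
by move: xC yC; rewrite !inE => /eqP-> /eqP->; rewrite eqxx.
Qed.

Lemma tip_not_in_hub_class y : is_tip y -> ~~ mem_nat hub_class y.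
Proof.
move=> ty; have := @hub_class_nonadj 0 y; rewrite flower_adj0 ty hub_in_class.
by move/(_ isT).
Qed.

Lemma pent_hub_class j : j < npent -> \sum_(i < 4) mem_nat hub_class (pent j i) <= 1.
Proof.
move=> jF; have out i : i < 4 -> (i == 0) || (i == 3) -> mem_nat hub_class (pent j i) = false.
  by move=> i4 ti; apply/negbTE/tip_not_in_hub_class; case: (pent_kind jF i4) => _ -> _.
rewrite !big_ord_recr big_ord0 /= (out 0) // (out 3) //.
by move: (hub_class_nonadj (pent_adj jF (isT : 1 < 3))); do 2 case: (mem_nat _ _).
Qed.

Lemma hept_hub_class j : \sum_(i < 6) mem_nat hub_class (hept j i) <= 2.
Proof.
have out i : i < 6 -> (i == 0) || (i == 5) -> mem_nat hub_class (hept j i) = false.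
  by move=> i6 ti; apply/negbTE/tip_not_in_hub_class; case: (hept_kind j i6) => _ -> _.
rewrite !big_ord_recr big_ord0 /= (out 0) // (out 5) //.
move: (hub_class_nonadj (hept_adj j (isT : 1 < 5))) (hub_class_nonadj (hept_adj j (isT : 2 < 5)))
  (hub_class_nonadj (hept_adj j (isT : 3 < 5))).
by move: (mem_nat hub_class (hept j 1)) (mem_nat hub_class (hept j 2))
  (mem_nat hub_class (hept j 3)) (mem_nat hub_class (hept j 4)); do 4 case.
Qed.

Lemma hub_class_card : #|hub_class| <= 1 + npent + 2 * p.
Proof.
rewrite card_mem_nat big_ltn // big_flower_split /=.
have leaves : \sum_(j < L) mem_nat hub_class j.+1 = 0.
  apply: big1 => j _; apply/eqP; rewrite eqb0 tip_not_in_hub_class //.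
  by case: (@leaf_kind j.+1); rewrite // /is_leaf /= ltn_ord.
have pents : \sum_(j < npent) \sum_(i < 4) mem_nat hub_class (pent j i) <= \sum_(j < npent) 1.
  by apply: leq_sum => j _; apply: pent_hub_class.
have hepts : \sum_(j < p) \sum_(i < 6) mem_nat hub_class (hept j i) <= \sum_(j < p) 2.
  by apply: leq_sum => j _; apply: hept_hub_class.
rewrite sum_nat_const card_ord muln1 in pents.
rewrite sum_nat_const card_ord mulnC in hepts.
rewrite leaves add0n addnA.
exact: leq_add (leq_add (leq_b1 _) pents) hepts.
Qed.
End HubClass.

Lemma flower_not_equitable : ~ exists c : 'I_m -> 'I_3, equitable_coloring flower c.
Proof.
case=> c eq_c; have := equitable3_card_le (c ord0) eq_c.
have := hub_class_card (proj1 eq_c); have := L_add_npent.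
by rewrite card_ord /nlast /hept_base; lia.
Qed.
End Flower.

Theorem mainTheorem3 :
  forall n l : nat, l <= 5 ->
  exists (m : nat) (e : rel 'I_m),
    simple_graph e /\ triangle_free e /\ outerplanar e /\
    n < m /\ #|V1 e| = l /\ rho3 e = 3%Z /\
    ~ (exists c : 'I_m -> 'I_3, equitable_coloring e c).
Proof.
move=> n l l_le5; have p_gt0 : 0 < n.+1 by [].
exists (nlast l n.+1).+1, (@flower l n.+1).
split; first exact: flower_simple.
split; first exact: flower_triangle_free.
split; first exact: flower_outerplanar.
split; first by rewrite /nlast; lia.
split; first exact: card_V1_flower.
split; first exact: rho3_flower.
exact: flower_not_equitable.
Qed.
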